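(* Let $G$ and $H$ be graphs. If there is a non-trivial graph $K$ such that $K\mid G$ and $K\mid H$, then $G$ and $H$ are not weakly disjoint.
   Context: A weight function on finite $U$ is $\alpha:U\times U\to\mathbb{R}$, $\alpha\ge0$, symmetric, summing to $1$; degree $p(u)=\sum_{u'}\alpha(u,u')$; a graph is $(U,\alpha)$; it is non-trivial if at least two vertices have positive degree. For graphs $G=(U,\alpha)$, $H=(V,\beta)$ with degrees $p,q$, $H\mid G$ means there is a surjective $\phi:U\to V$ with (i) $q(v)=\sum_{u\in\phi^{-1}(v)}p(u)$ for all $v$, and (ii) $q(v)\sum_{u'\in\phi^{-1}(v')}\alpha(u,u')=p(u)\beta(v,v')$ for all $v,v'$, $u\in\phi^{-1}(v)$. A weight joining of $\alpha,\beta$ is a weight function $\gamma$ on $U\times V$ with degree $r(u,v)=\sum_{(u',v')}\gamma((u,v),(u',v'))$ such that $\sum_v r(u,v)=p(u)$, $\sum_u r(u,v)=q(v)$, $p(u)\sum_{\tilde v}\gamma((u,v),(u',\tilde v))=\alpha(u,u')r(u,v)$ and $q(v)\sum_{\tilde u}\gamma((u,v),(\tilde u,v'))=\beta(v,v')r(u,v)$. $G,H$ are weakly disjoint if every weight joining has degree $r(u,v)=p(u)q(v)$. *)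

From mathcomp Require Import all_boot all_order all_algebra.
From mathcomp Require Import reals.
Set Implicit Arguments. Unset Strict Implicit. Unset Printing Implicit Defensive.
Import Order.TTheory GRing.Theory Num.Theory.
Local Open Scope ring_scope.

Section GraphDefs.
Variable R : realType.

Definition weight_fun (U : finType) (a : U -> U -> R) : Prop :=
  [/\ forall u u', 0 <= a u u',
      forall u u', a u u' = a u' u
    & \sum_(u : U) \sum_(u' : U) a u u' = 1].

Record graph := Graph {
  gvert : finType;
  gweight : gvert -> gvert -> R;
  gweightP : weight_fun gweight }.

Definition degree (U : finType) (a : U -> U -> R) (u : U) : R :=
  \sum_(u' : U) a u u'.

Definition gdeg (G : graph) : gvert G -> R := degree (@gweight G).

Definition nontrivial (G : graph) : Prop :=
  exists u1 u2 : gvert G, [/\ u1 != u2, 0 < gdeg u1 & 0 < gdeg u2].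

Definition gdivides (H G : graph) : Prop :=
  exists phi : gvert G -> gvert H,
    [/\ (forall v : gvert H, exists u : gvert G, phi u = v),
        (forall v : gvert H, gdeg v = \sum_(u : gvert G | phi u == v) gdeg u)
      & (forall (v v' : gvert H) (u : gvert G), phi u = v ->
           gdeg v * (\sum_(u' : gvert G | phi u' == v') gweight u u')
           = gdeg u * gweight v v')].

Definition weight_joining (G H : graph)
    (c : (gvert G * gvert H) -> (gvert G * gvert H) -> R) : Prop :=
  let p := @gdeg G in let q := @gdeg H in
  let a := @gweight G in let b := @gweight H in
  let r := degree c in
  [/\ weight_fun c,
      (forall u, \sum_(v : gvert H) r (u, v) = p u),
      (forall v, \sum_(u : gvert G) r (u, v) = q v),
      (forall u v u', p u * (\sum_(v2 : gvert H) c (u, v) (u', v2))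
                      = a u u' * r (u, v))
    & (forall u v v', q v * (\sum_(u2 : gvert G) c (u, v) (u2, v'))
                      = b v v' * r (u, v))].

Definition weakly_disjoint (G H : graph) : Prop :=
  forall c : (gvert G * gvert H) -> (gvert G * gvert H) -> R,
    @weight_joining G H c ->
    forall (u : gvert G) (v : gvert H), degree c (u, v) = @gdeg G u * @gdeg H v.

End GraphDefs.

From mathcomp Require Import all_boot all_order all_algebra.
From mathcomp Require Import reals.
From mathcomp Require Import ring.
Set Implicit Arguments. Unset Strict Implicit. Unset Printing Implicit Defensive.
Import Order.TTheory GRing.Theory Num.Theory.
Local Open Scope ring_scope.

(* If phi : G -> K and psi : H -> K are factor maps onto a common quotient K,
   the relatively independent joining of G and H over K,
     gamma((u,v),(u',v')) = [phi u = psi v][phi u' = psi v']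
                            alpha(u,u') beta(v,v') / kappa(phi u, phi u'),
   is a weight joining supported on the fibre product (where kappa vanishes,
   so does alpha, so the convention x / 0 = 0 is harmless).  Its degree at (u,v)
   vanishes unless phi u = psi v.  When K is non-trivial, pick two distinct
   vertices of K of positive degree and vertices u, v of positive degree
   above them: the degree of gamma at (u,v) is 0, not p(u) q(v). *)

Section GraphFacts.
Variables (R : realType) (G : graph R).

Lemma gweight_ge0 (u u' : gvert G) : 0 <= gweight u u'.
Proof. by case: (gweightP G) => ge0 _ _; apply: ge0. Qed.

Lemma gweightC (u u' : gvert G) : gweight u u' = gweight u' u.
Proof. by case: (gweightP G) => _ sym _; apply: sym. Qed.

Lemma sum_gdeg : \sum_(u : gvert G) gdeg u = 1.
Proof. by case: (gweightP G). Qed.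

Lemma gdeg_ge0 (u : gvert G) : 0 <= gdeg u.
Proof. by apply: sumr_ge0 => u' _; apply: gweight_ge0. Qed.

Lemma gdeg0_gweight (u u' : gvert G) : gdeg u = 0 -> gweight u u' = 0.
Proof. by move/psumr_eq0P; apply=> // *; apply: gweight_ge0. Qed.

End GraphFacts.

(* Conditions (i) and (ii) of K | G. *)
Definition factor_map (R : realType) (G K : graph R) (phi : gvert G -> gvert K) :=
  (forall w, gdeg w = \sum_(u | phi u == w) gdeg u) /\
  (forall u w, gdeg (phi u) * (\sum_(u' | phi u' == w) gweight u u')
               = gdeg u * gweight (phi u) w).

Lemma gdividesP (R : realType) (K G : graph R) :
  gdivides K G -> exists phi : gvert G -> gvert K, factor_map phi.
Proof.
case=> phi [_ phi_deg phi_weight]; exists phi.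
by split=> // u w; apply: phi_weight.
Qed.

Section FactorMap.
Variables (R : realType) (G K : graph R) (phi : gvert G -> gvert K).
Hypothesis phiF : factor_map phi.

Lemma fiber_gdeg_pos (w : gvert K) :
  0 < gdeg w -> exists u, phi u = w /\ 0 < gdeg u.
Proof.
case: phiF => -> _ /lt0r_neq0 /eqP /psumr_neq0P[u _|u /andP[/eqP <- pu]].
  exact: gdeg_ge0.
by exists u.
Qed.

Lemma gdeg_fiber0 (u : gvert G) : gdeg (phi u) = 0 -> gdeg u = 0.
Proof.
case: phiF => phi_deg _ k0; move: (phi_deg (phi u)); rewrite k0.
by move/esym/psumr_eq0P; apply=> // *; apply: gdeg_ge0.
Qed.

Lemma gdeg_ratioK (u : gvert G) : gdeg u / gdeg (phi u) * gdeg (phi u) = gdeg u.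
Proof.
have [k0|k_neq0] := eqVneq (gdeg (phi u)) 0; last by rewrite divfK.
by rewrite k0 mulr0 gdeg_fiber0.
Qed.

Lemma sum_fiber_gweight (u : gvert G) (w : gvert K) :
  \sum_(u' | phi u' == w) gweight u u' = gdeg u / gdeg (phi u) * gweight (phi u) w.
Proof.
have [k0|k_neq0] := eqVneq (gdeg (phi u)) 0.
  rewrite gdeg_fiber0 // !mul0r big1 // => u' _.
  by rewrite gdeg0_gweight // gdeg_fiber0.
apply: (mulfI k_neq0); case: phiF => _ ->; by field.
Qed.

Lemma gweight_fiber0 (u u' : gvert G) :
  gweight (phi u) (phi u') = 0 -> gweight u u' = 0.
Proof.
move=> kappa0; have := sum_fiber_gweight u (phi u'); rewrite kappa0 mulr0.
by move/psumr_eq0P; apply=> //= *; apply: gweight_ge0.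
Qed.

End FactorMap.

Definition rel_joining (R : realType) (G H K : graph R)
    (phi : gvert G -> gvert K) (psi : gvert H -> gvert K)
    (x y : gvert G * gvert H) : R :=
  if (phi x.1 == psi x.2) && (phi y.1 == psi y.2) then
    gweight x.1 y.1 * gweight x.2 y.2 / gweight (phi x.1) (phi y.1)
  else 0.

Section JoiningSwap.
Variables (R : realType) (G H K : graph R).
Variables (phi : gvert G -> gvert K) (psi : gvert H -> gvert K).

Lemma rel_joining_swap (x y : gvert G * gvert H) :
  rel_joining psi phi (x.2, x.1) (y.2, y.1) = rel_joining phi psi x y.
Proof.
rewrite /rel_joining /= [psi x.2 == _]eq_sym [psi y.2 == _]eq_sym.
by case: ifP => // /andP[/eqP -> /eqP ->]; rewrite (mulrC (gweight x.2 _)).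
Qed.

Lemma degree_rel_joining_swap (u : gvert G) (v : gvert H) :
  degree (rel_joining psi phi) (v, u) = degree (rel_joining phi psi) (u, v).
Proof.
rewrite /degree -(pair_bigA _ (fun v' u' => rel_joining psi phi (v, u) (v', u'))).
rewrite -(pair_bigA _ (fun u' v' => rel_joining phi psi (u, v) (u', v'))) exchange_big.
by apply: eq_bigr => u' _; apply: eq_bigr => v' _; rewrite -rel_joining_swap.
Qed.

End JoiningSwap.

Section RelIndepJoining.
Variables (R : realType) (G H K : graph R).
Variables (phi : gvert G -> gvert K) (psi : gvert H -> gvert K).
Hypotheses (phiF : factor_map phi) (psiF : factor_map psi).

Local Notation gamma := (rel_joining phi psi).

Lemma rel_joining_off_fiber (u : gvert G) (v : gvert H) y :
  phi u != psi v -> gamma (u, v) y = 0.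
Proof. by rewrite /rel_joining /= => /negbTE ->. Qed.

Lemma sum_rel_joining_row (u u' : gvert G) (v : gvert H) : phi u = psi v ->
  \sum_(v' : gvert H) gamma (u, v) (u', v')
  = gweight u u' * (gdeg v / gdeg (phi u)).
Proof.
move=> e; rewrite /rel_joining /= e eqxx -big_mkcond /=.
under eq_bigl => v' do rewrite eq_sym.
rewrite -mulr_suml -mulr_sumr (sum_fiber_gweight psiF) -e.
have [kappa0|kappa_neq0] := eqVneq (gweight (phi u) (phi u')) 0.
  by rewrite (gweight_fiber0 phiF kappa0) !mul0r.
by rewrite mulrA mulfK.
Qed.

Lemma degree_rel_joining (u : gvert G) (v : gvert H) :
  degree gamma (u, v) = if phi u == psi v then gdeg u * gdeg v / gdeg (phi u) else 0.
Proof.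
case: eqP => [e|/eqP ne]; last by apply: big1 => y _; rewrite rel_joining_off_fiber.
rewrite /degree -(pair_bigA _ (fun u' v' => gamma (u, v) (u', v'))) /=.
under eq_bigr => u' _ do rewrite sum_rel_joining_row //.
by rewrite -mulr_suml mulrA.
Qed.

Lemma rel_joining_marginal (u : gvert G) :
  \sum_(v : gvert H) degree gamma (u, v) = gdeg u.
Proof.
under eq_bigr => v _ do rewrite degree_rel_joining.
rewrite -big_mkcond /=; under eq_bigl => v do rewrite eq_sym.
under eq_bigr => v _ do rewrite mulrAC.
by rewrite -mulr_sumr; case: psiF => <- _; apply: gdeg_ratioK.
Qed.

Lemma rel_joining_weight_fun : weight_fun gamma.
Proof.
split=> [x y|x y|].
- rewrite /rel_joining; case: ifP => // _.
  by rewrite divr_ge0 ?mulr_ge0 ?gweight_ge0.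
- rewrite /rel_joining andbC; case: ifP => // _.
  by rewrite gweightC (gweightC x.2) (gweightC (phi x.1)).
- rewrite -(pair_bigA _ (fun u v => degree gamma (u, v))) /=.
  under eq_bigr => u _ do rewrite rel_joining_marginal.
  exact: sum_gdeg.
Qed.

Lemma rel_joining_transition (u : gvert G) (v : gvert H) (u' : gvert G) :
  gdeg u * (\sum_(v' : gvert H) gamma (u, v) (u', v'))
  = gweight u u' * degree gamma (u, v).
Proof.
rewrite degree_rel_joining; case: eqP => [e|/eqP ne].
  by rewrite sum_rel_joining_row //; ring.
by rewrite big1 ?mulr0 // => v' _; rewrite rel_joining_off_fiber.
Qed.

End RelIndepJoining.

(* The conditions on the H side are those on the G side for the joining of
   H and G over K, transported along the swap of coordinates. *)
Lemma rel_joining_weight_joining (R : realType) (G H K : graph R)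
    (phi : gvert G -> gvert K) (psi : gvert H -> gvert K) :
  factor_map phi -> factor_map psi -> weight_joining (rel_joining phi psi).
Proof.
move=> phiF psiF; split.
- exact: rel_joining_weight_fun phiF psiF.
- exact: rel_joining_marginal phiF psiF.
- move=> v; rewrite -(rel_joining_marginal psiF phiF v).
  by apply: eq_bigr => u _; rewrite degree_rel_joining_swap.
- exact: rel_joining_transition phiF psiF.
- move=> u v v'; under eq_bigr => u' _ do rewrite -(rel_joining_swap _ _ (u, v)).
  by rewrite -degree_rel_joining_swap (rel_joining_transition psiF phiF).
Qed.

Theorem proposition4p7 (R : realType) (G H : graph R) :
  (exists K : graph R, [/\ nontrivial K, gdivides K G & gdivides K H]) ->
  ~ weakly_disjoint G H.
Proof.
move=> [K [[w1 [w2 [w12 w1_pos w2_pos]]] /gdividesP[phi phiF] /gdividesP[psi psiF]]].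
have [u [phi_u pu]] := fiber_gdeg_pos phiF w1_pos.
have [v [psi_v qv]] := fiber_gdeg_pos psiF w2_pos.
move=> /(_ _ (rel_joining_weight_joining phiF psiF) u v).
rewrite (degree_rel_joining phiF psiF) phi_u psi_v (negbTE w12) => /esym/eqP.
by rewrite mulf_eq0 (gt_eqF pu) (gt_eqF qv).
Qed.
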